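(* Let $d\ge1$, $n>0$ and $N=(d+1)n+d-1$. The number of maximal $d$-Brauer relations of an $N$-gon is $\frac{1}{n+1}\binom{(d+1)n+d-1}{n}$.
   Context: Let $\Pi$ be an $N$-gon with vertices numbered clockwise $1,\dots,N$ (mod $N$). A $d$-diagonal is a diagonal joining vertices $i$ and $i+d+j(d+1)$ for some $0\le j\le n-1$. A $d$-Brauer relation is a set of pairwise disjoint $d$-diagonals, and it is maximal if it is maximal with respect to inclusion. *)

From mathcomp Require Import all_boot.
Set Implicit Arguments. Unset Strict Implicit. Unset Printing Implicit Defensive.

(* Number of vertices N = (d+1)n + d - 1.  Vertices are 'I_N, i.e. labelled
   0,...,N-1 clockwise (a relabelling of 1,...,N), arithmetic mod N. *)
Definition Nsz (d n : nat) : nat := (d + 1) * n + d - 1.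

Notation vert d n := ('I_(Nsz d n)).

(* A (possibly boundary) chord is an unordered pair {x, y}, represented as a
   two-element set of vertices. *)
Definition is_ddiag (d n : nat) (D : {set vert d n}) : bool :=
  [exists x : vert d n, exists y : vert d n,
     [&& D == [set x; y], x != y &
         [exists j : 'I_n, val y == (val x + d + val j * (d + 1)) %% Nsz d n]]].

Definition chords_cross (d n : nat) (D1 D2 : {set vert d n}) : bool :=
  [exists a : vert d n, exists b : vert d n, exists c : vert d n,
     exists e : vert d n,
     [&& D1 == [set a; b], D2 == [set c; e] & (a < c < b) && (b < e)]].

Definition chords_disjoint (d n : nat) (D1 D2 : {set vert d n}) : bool :=
  [disjoint D1 & D2] && ~~ chords_cross D1 D2 && ~~ chords_cross D2 D1.

Definition brauer_rel (d n : nat) (R : {set {set vert d n}}) : Prop :=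
  (forall D, D \in R -> is_ddiag D) /\
  (forall D1 D2, D1 \in R -> D2 \in R -> D1 != D2 -> chords_disjoint D1 D2).

Definition max_brauer_rel (d n : nat) (R : {set {set vert d n}}) : Prop :=
  brauer_rel R /\ (forall S, brauer_rel S -> R \subset S -> S = R).

From mathcomp Require Import all_boot zify boolp.
Set Implicit Arguments. Unset Strict Implicit. Unset Printing Implicit Defensive.

(* Cut the N-gon open between vertices N - 1 and 0.  Since N = -2 (mod d + 1), the
   d-diagonals become the chords x < y of the segment [0, N) with y - x = d (mod d + 1),
   and two of them are disjoint when their endpoints are distinct and do not interleave.
   In a maximal relation on (d + 1) n + d - 1 points, n > 0, the last left endpoint x
   carries the short chord {x, x + d}; deleting this block of d + 1 points leaves a
   maximal relation on (d + 1) (n - 1) + d - 1 points, and conversely inserting a block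
   anywhere preserves maximality.  So a maximal relation is determined by its word of
   left endpoints, and these words are exactly those obtained from false^(d - 1) by
   inserting blocks [true; false^d], i.e. the words whose walk from d - 1 (up d on
   true, down 1 on false) never goes below 0 and ends at 0.  Counting these walks by
   their first step gives the generalized Catalan number. *)

(** * Noncrossing chords of a segment *)

Definition chord d L x y := [&& x < y, y < L & (y - x) %% d.+1 == d].

Definition apart a b c e :=
  [&& a != c, a != e, b != c & b != e] && ~~ [&& a < c, c < b & b < e]
  && ~~ [&& c < a, a < e & e < b].

Definition brauer d L (r : rel nat) :=
  (forall x y, r x y -> chord d L x y) /\
  (forall x y u v, r x y -> r u v -> (x != u) || (y != v) -> apart x y u v).

(* A chord of r blocks itself, as [apart x y x y] is false. *)
Definition saturated d L (r : rel nat) :=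
  forall u v, chord d L u v -> exists x y, r x y /\ ~~ apart x y u v.

Definition max_brauer d L r := brauer d L r /\ saturated d L r.

Lemma chordP d L x y :
  reflect [/\ x < y, y < L & exists q, y - x = q * d.+1 + d] (chord d L x y).
Proof.
apply: (iffP and3P) => [[xy yL /eqP yx]|[xy yL [q ->]]].
  by split=> //; exists ((y - x) %/ d.+1); rewrite {1}(divn_eq (y - x) d.+1) yx.
by rewrite modnMDl modn_small.
Qed.

Lemma chord_ge d L x y : chord d L x y -> x + d <= y.
Proof. by case/chordP => xy _ [q yx]; nia. Qed.

Lemma chord_lt d L x y : chord d L x y -> y < L.
Proof. by case/chordP. Qed.

Lemma chord_block d L x : 0 < d -> x + d < L -> chord d L x (x + d).
Proof. by move=> d0 xL; apply/chordP; split; [lia | | exists 0; lia]. Qed.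

Lemma apart_sym a b c e : apart a b c e = apart c e a b.
Proof. by rewrite /apart; apply/idP/idP; lia. Qed.

Lemma brauer_short d L r a b : L <= d -> brauer d L r -> r a b = false.
Proof.
move=> Ld [hc _]; apply/negP => /hc hab.
by have := chord_ge hab; have := chord_lt hab; lia.
Qed.

Section Block.

Variables d x : nat.

Definition skip a := if a < x then a else a + d.+1.
Definition unskip a := if a < x then a else a - d.+1.
Definition in_block a := x <= a <= x + d.

Definition contract_block (r : rel nat) : rel nat := fun a b => r (skip a) (skip b).

Definition insert_block (r : rel nat) : rel nat := fun a b =>
  ((a == x) && (b == x + d)) ||
  [&& ~~ in_block a, ~~ in_block b & r (unskip a) (unskip b)].

Lemma ltn_skip a b : (skip a < skip b) = (a < b).
Proof. by rewrite /skip; case: ifP; case: ifP; lia. Qed.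

Lemma eqn_skip a b : (skip a == skip b) = (a == b).
Proof. by rewrite /skip; case: ifP; case: ifP; lia. Qed.

Lemma apart_skip a b c e : apart (skip a) (skip b) (skip c) (skip e) = apart a b c e.
Proof. by rewrite /apart !ltn_skip !eqn_skip. Qed.

Lemma skipK : cancel skip unskip.
Proof. by move=> a; rewrite /skip /unskip; case: (ltnP a x) => ax; rewrite ?ax // ifN; lia. Qed.

Lemma unskipK a : ~~ in_block a -> skip (unskip a) = a.
Proof.
by rewrite /in_block /skip /unskip => ab; case: (ltnP a x) => ax; rewrite ?ax // ifN; lia.
Qed.

Lemma skip_out_block a : ~~ in_block (skip a).
Proof. by rewrite /in_block /skip; case: ifP; lia. Qed.

Lemma chord_skip L a b : x <= L ->
  chord d (L + d.+1) (skip a) (skip b) = chord d L a b.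
Proof.
move=> xL; rewrite /chord /skip.
case: (ltnP a x) => ax; case: (ltnP b x) => bx.
- by congr [&& _, _ & _]; lia.
- have -> : b + d.+1 - a = (b - a) + d.+1 by lia.
  by rewrite modnDr ltn_add2r; congr [&& _, _ & _]; lia.
- by apply/idP/idP; lia.
- have -> : b + d.+1 - (a + d.+1) = b - a by lia.
  by rewrite !ltn_add2r.
Qed.

Lemma apart_block u v : ~~ in_block u -> ~~ in_block v -> u < v -> apart x (x + d) u v.
Proof. by rewrite /in_block /apart; lia. Qed.

Lemma chord_off_block L r a b : brauer d L r -> r x (x + d) -> r a b ->
  ((a == x) && (b == x + d)) || ~~ in_block a && ~~ in_block b.
Proof.
move=> [hc hv] hx hab; case E: ((a == x) && (b == x + d)) => //=.
have ne : (a != x) || (b != x + d) by move: E; case: (a == x); case: (b == x + d).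
have := hv _ _ _ _ hab hx ne.
have := chord_ge (hc _ _ hab); have [ab _ _] := chordP _ _ _ _ (hc _ _ hab).
by rewrite /apart /in_block; lia.
Qed.

Lemma max_brauer_contract L r : max_brauer d (L + d.+1) r -> r x (x + d) ->
  max_brauer d L (contract_block r).
Proof.
move=> [[hc hv] hs] hx.
have xL : x <= L by have := chord_lt (hc _ _ hx); lia.
split; first split.
- by move=> a b h; rewrite -(chord_skip _ _ xL); apply: hc.
- by move=> a b u v h1 h2 hne; rewrite -apart_skip; apply: hv; rewrite ?eqn_skip.
move=> u v huv.
have /hs[a [b [hab nap]]] : chord d (L + d.+1) (skip u) (skip v) by rewrite chord_skip.
case/orP: (chord_off_block (conj hc hv) hx hab) => [/andP[/eqP ea /eqP eb]|/andP[ab bb]].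
  have : skip u < skip v by rewrite ltn_skip; case/and3P: huv.
  move/(apart_block (skip_out_block u) (skip_out_block v)).
  by move: nap; rewrite ea eb => /negbTE ->.
by exists (unskip a), (unskip b); rewrite /contract_block -apart_skip !unskipK.
Qed.

Lemma brauer_insert_block L r : 0 < d -> x <= L -> brauer d L r ->
  brauer d (L + d.+1) (insert_block r).
Proof.
move=> d0 xL [hc hv].
have insP a b : insert_block r a b -> ((a == x) && (b == x + d)) \/
    [/\ ~~ in_block a, ~~ in_block b & r (unskip a) (unskip b)].
  by case/orP=> [->|/and3P[]]; [left | right].
have hc' a b : insert_block r a b -> chord d (L + d.+1) a b.
  case/insP => [/andP[/eqP-> /eqP->]|[ab bb rab]]; first by apply: chord_block; lia.
  by rewrite -(unskipK ab) -(unskipK bb) chord_skip //; apply: hc.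
split=> // a b u v h1 h2 ne.
case: (insP _ _ h1) => [/andP[/eqP ea /eqP eb]|[ab bb r1]];
case: (insP _ _ h2) => [/andP[/eqP eu /eqP ev]|[ub vb r2]].
- by move: ne; rewrite ea eb eu ev !eqxx.
- by rewrite ea eb; apply: apart_block => //; case/and3P: (hc' _ _ h2).
- by rewrite eu ev apart_sym; apply: apart_block => //; case/and3P: (hc' _ _ h1).
rewrite -(unskipK ab) -(unskipK bb) -(unskipK ub) -(unskipK vb) apart_skip.
apply: hv => //; move: ne; apply: contraLR; rewrite negb_or !negbK.
case/andP=> /eqP e1 /eqP e2.
by rewrite -(unskipK ab) -(unskipK bb) e1 e2 (unskipK ub) (unskipK vb) !eqxx.
Qed.

Lemma max_brauer_insert L r : 0 < d -> x <= L -> max_brauer d L r ->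
  max_brauer d (L + d.+1) (insert_block r).
Proof.
move=> d0 xL [hr hs]; split; first exact: brauer_insert_block.
move=> u v uv.
case E: (~~ in_block u && ~~ in_block v).
  case/andP: E => ub vb.
  have /hs[a [b [rab nap]]] : chord d L (unskip u) (unskip v).
    by rewrite -(chord_skip _ _ xL) !unskipK.
  exists (skip a), (skip b); split.
    by rewrite /insert_block !skip_out_block !skipK rab orbT.
  by rewrite -(unskipK ub) -(unskipK vb) apart_skip.
exists x, (x + d); split; first by rewrite /insert_block !eqxx.
have := chord_ge uv; case/and3P: uv => *.
by move: E; rewrite /apart /in_block; lia.
Qed.

Lemma insert_contract_block L r : brauer d L r -> r x (x + d) ->
  r =2 insert_block (contract_block r).
Proof.
move=> hr hx a b; rewrite /insert_block /contract_block.
case rab: (r a b).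
  case/orP: (chord_off_block hr hx rab) => [-> //|/andP[ab bb]].
  by rewrite ab bb !unskipK // rab orbT.
apply/esym/negbTE; rewrite negb_or; apply/andP; split.
  by apply/negP => /andP[/eqP ea /eqP eb]; move: rab; rewrite ea eb hx.
by apply/negP => /and3P[ab bb]; rewrite !unskipK // rab.
Qed.

End Block.

(** * Opener words and walks *)

Definition opener L (r : rel nat) a := has (r a) (iota 0 L).

Definition word L r := mkseq (opener L r) L.

Definition insert_word d x (w : seq bool) := take x w ++ true :: nseq d false ++ drop x w.

Lemma openerP d L r a : brauer d L r -> reflect (exists b, r a b) (opener L r a).
Proof.
move=> [hc _]; apply: (iffP hasP) => [[b _ h]|[b h]]; first by exists b.
by exists b => //; rewrite mem_iota add0n (chord_lt (hc _ _ h)).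
Qed.

Lemma opener_nth d L r a : brauer d L r -> opener L r a = nth false (word L r) a.
Proof.
move=> hr; case: (ltnP a L) => aL; first by rewrite nth_mkseq.
rewrite nth_default ?size_mkseq //; apply/(openerP _ hr) => -[b /hr.1/chordP[ab bL _]].
lia.
Qed.

Lemma eq_word L r1 r2 : r1 =2 r2 -> word L r1 = word L r2.
Proof. by move=> e; apply: eq_mkseq => a; apply: eq_has => b; apply: e. Qed.

Lemma size_insert_word d x w : x <= size w -> size (insert_word d x w) = size w + d.+1.
Proof.
move=> xw; rewrite /insert_word size_cat size_take /= size_cat size_nseq size_drop.
by case: ifP; lia.
Qed.

Lemma nth_insert_word d x w i : x <= size w ->
  nth false (insert_word d x w) i =
  if i < x then nth false w i else if i == x then true
  else if i <= x + d then false else nth false w (i - d.+1).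
Proof.
move=> xw; rewrite /insert_word nth_cat size_take.
have -> : (if x < size w then x else size w) = x by case: ifP; lia.
case: ifP => ix; first by rewrite nth_take.
case: eqP => [->|nix]; first by rewrite subnn.
have -> : i - x = (i - x - 1).+1 by lia.
rewrite /= nth_cat size_nseq; case: ifP => ixd.
  by rewrite nth_nseq ixd ifT //; lia.
by rewrite ifN ?nth_drop; [congr nth | ]; lia.
Qed.

Lemma insert_word_inj d x u v : x <= size u -> x <= size v ->
  insert_word d x u = insert_word d x v -> u = v.
Proof.
move=> xu xv e; rewrite -(cat_take_drop x u) -(cat_take_drop x v).
have sz w : x <= size w -> size (take x w) = x by move=> xw; rewrite size_take; case: ifP; lia.
have /eqP := e; rewrite /insert_word eqseq_cat ?sz // => /andP[/eqP -> /eqP[]].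
by move/eqP; rewrite eqseq_cat // => /andP[_ /eqP ->].
Qed.

Lemma opener_insert_block d x L r a : 0 < d -> x <= L -> brauer d L r ->
  opener (L + d.+1) (insert_block d x r) a =
  if a == x then true else if in_block d x a then false else opener L r (unskip d x a).
Proof.
move=> d0 xL hr; have hr' := brauer_insert_block d0 xL hr.
case: eqP => [->|nax].
  by apply/(openerP _ hr'); exists (x + d); rewrite /insert_block !eqxx.
have nax' : (a == x) = false by apply/eqP.
case: ifP => ab.
  by apply/(openerP _ hr') => -[b]; rewrite /insert_block ab nax'.
apply/(openerP _ hr')/(openerP _ hr) => -[b].
  by rewrite /insert_block ab nax' /= => /andP[_ h]; exists (unskip d x b).
by move=> h; exists (skip d x b); rewrite /insert_block ab skip_out_block skipK h orbT.
Qed.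

Lemma word_insert_block d x L r : 0 < d -> x <= L -> brauer d L r ->
  word (L + d.+1) (insert_block d x r) = insert_word d x (word L r).
Proof.
move=> d0 xL hr.
apply: (@eq_from_nth _ false); first by rewrite size_insert_word !size_mkseq.
move=> i; rewrite size_mkseq => iL.
rewrite nth_mkseq // nth_insert_word ?size_mkseq // opener_insert_block // /in_block /unskip.
case: (ltnP i x) => ix.
  by rewrite nth_mkseq ?(leq_trans ix xL) // ifN ?(leq_gtF ix); lia.
case: eqP => //= nix; case: leqP => // ixd.
by rewrite nth_mkseq //; lia.
Qed.

Lemma word_short d L r : L <= d -> brauer d L r -> word L r = nseq L false.
Proof.
move=> Ld hr; apply: (@eq_from_nth _ false) => [|i]; rewrite size_mkseq ?size_nseq // => iL.
rewrite nth_mkseq // nth_nseq iL.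
by apply/(openerP _ hr) => -[b]; rewrite (brauer_short _ _ Ld hr).
Qed.

Lemma exists_last_opener d L r : 0 < d -> d < L -> max_brauer d L r ->
  exists x, opener L r x /\ forall a, opener L r a -> a <= x.
Proof.
move=> d0 dL [hr hs].
have [a [b [hab _]]] := hs 0 d (@chord_block _ _ 0 d0 dL).
have ex : exists a, opener L r a by exists a; apply/(openerP _ hr); exists b.
have ub a' : opener L r a' -> a' <= L.
  by case/(openerP _ hr) => b' /hr.1/chordP[ab bL _]; lia.
by case: (ex_maxnP ex ub) => x ox xmax; exists x.
Qed.

Lemma last_opener_block d L r x : 0 < d -> max_brauer d L r -> opener L r x ->
  (forall a, opener L r a -> a <= x) -> r x (x + d).
Proof.
move=> d0 [[hc hv] hs] /(openerP _ (conj hc hv))[y rxy] xmax.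
(* A longer chord from x would enclose the short chord {x + 1, x + 1 + d}, which no
   chord starting at or before x can then block. *)
have [xy yL [[|q] yx]] := chordP _ _ _ _ (hc _ _ rxy); first by have <- : y = x + d by lia.
have /hs[a [b [rab nap]]] : chord d L x.+1 (x.+1 + d) by apply: chord_block; nia.
have [ab _ _] := chordP _ _ _ _ (hc _ _ rab).
have ax : a <= x by apply: xmax; apply/(openerP _ (conj hc hv)); exists b.
have [ex|nx] := eqVneq a x.
  have [eb|nb] := eqVneq b y; first by move: nap; rewrite ex eb /apart; nia.
  by have := hv _ _ _ _ rab rxy; rewrite nb orbT ex /apart eqxx => /(_ isT).
have := hv _ _ _ _ rab rxy; rewrite nx => /(_ isT).
by move: nap; rewrite /apart; nia.
Qed.

Lemma max_brauer_peel d L r x : 0 < d -> max_brauer d (L + d.+1) r -> r x (x + d) ->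
  [/\ x <= L, max_brauer d L (contract_block d x r) &
      word (L + d.+1) r = insert_word d x (word L (contract_block d x r))].
Proof.
move=> d0 hm rx.
have xL : x <= L by have := chord_lt (hm.1.1 _ _ rx); lia.
have hm' := max_brauer_contract hm rx.
split=> //; rewrite (eq_word _ (insert_contract_block hm.1 rx)).
exact: word_insert_block hm'.1.
Qed.

Fixpoint walk d k (w : seq bool) : option nat :=
  if w is b :: w' then
    if b then walk d (k + d) w' else if k is k'.+1 then walk d k' w' else None
  else Some k.

Lemma walk_cat d k u v : walk d k (u ++ v) = obind (walk d ^~ v) (walk d k u).
Proof. by elim: u k => [//|[] u IH] [|k] /=. Qed.

Lemma walk_nseq_false d k j :
  walk d k (nseq j false) = if j <= k then Some (k - j) else None.
Proof. by elim: j k => [|j IH] [|k] //=; rewrite ?subn0 ?IH ?subSS. Qed.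

Lemma walk_insert_word d k x w : x <= size w -> walk d k (insert_word d x w) = walk d k w.
Proof.
move=> xw; rewrite /insert_word walk_cat -{3}(cat_take_drop x w) walk_cat.
case: (walk d k (take x w)) => //= k'.
by rewrite walk_cat walk_nseq_false leq_addl addnK.
Qed.

Lemma walk_count d k k' w : walk d k w = Some k' ->
  size w + k' = k + d.+1 * count_mem true w.
Proof.
elim: w k => [|[] w IH] k /=; first by case=> ->; lia.
  by move/IH; set c := count_mem true w; rewrite mulnDr; lia.
by case: k => [//|k] /IH; set c := count_mem true w; lia.
Qed.

Lemma count_true0 (w : seq bool) : count_mem true w = 0 -> w = nseq (size w) false.
Proof. by elim: w => [//|[] w IH] //= /IH {1}->. Qed.

Lemma last_true_split (w : seq bool) : true \in w ->
  exists pre j, w = pre ++ true :: nseq j false.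
Proof.
elim/last_ind: w => [//|w [] IH]; first by exists w, 0; rewrite -cats1.
rewrite mem_rcons inE /= => /IH[pre [j ->]].
by exists pre, j.+1; rewrite rcons_cat rcons_cons -cats1 -[j.+1]addn1 nseqD.
Qed.

Lemma walk_last_block d k w : walk d k w = Some 0 -> true \in w ->
  exists x w', [/\ x <= size w', w = insert_word d x w' & walk d k w' = Some 0].
Proof.
move=> hw /last_true_split[pre [j ew]]; move: hw; rewrite ew walk_cat.
case wpre: (walk d k pre) => [k1|//] /=.
rewrite walk_nseq_false; case: ifP => // jk [] jk'.
have -> : j = d + k1 by lia.
exists (size pre), (pre ++ nseq k1 false); split.
- by rewrite size_cat; lia.
- by rewrite /insert_word take_size_cat // drop_size_cat // nseqD.
- by rewrite walk_cat wpre /= walk_nseq_false leqnn subnn.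
Qed.

Section Bijection.

Variable d : nat.
Hypothesis d_gt0 : 0 < d.

Let len n := d.+1 * n + (d - 1).

Lemma len0 : len 0 = d - 1.
Proof. by rewrite /len muln0. Qed.

Lemma lenS n : len n.+1 = len n + d.+1.
Proof. by rewrite /len mulnS; lia. Qed.

Lemma walk_word_max_brauer n r : max_brauer d (len n) r ->
  walk d (d - 1) (word (len n) r) = Some 0.
Proof.
elim: n r => [|n IH] r; rewrite ?lenS => hm.
  by rewrite len0 in hm *; rewrite (word_short _ hm.1) ?walk_nseq_false ?leqnn ?subnn //; lia.
have [x [ox xmax]] := exists_last_opener d_gt0 (ltac:(lia) : d < len n + d.+1) hm.
have [xL hm' ->] := max_brauer_peel d_gt0 hm (last_opener_block d_gt0 hm ox xmax).
by rewrite walk_insert_word ?size_mkseq // IH.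
Qed.

Lemma max_brauer_word_inj n r1 r2 :
  max_brauer d (len n) r1 -> max_brauer d (len n) r2 ->
  word (len n) r1 = word (len n) r2 -> r1 =2 r2.
Proof.
elim: n r1 r2 => [|n IH] r1 r2; rewrite ?lenS => hm1 hm2 ew.
  have L0 : len 0 <= d by rewrite len0; lia.
  by move=> a b; rewrite (brauer_short _ _ L0 hm1.1) (brauer_short _ _ L0 hm2.1).
have eo a : opener (len n + d.+1) r1 a = opener (len n + d.+1) r2 a.
  by rewrite (opener_nth _ hm1.1) (opener_nth _ hm2.1) ew.
have [x [ox xmax]] := exists_last_opener d_gt0 (ltac:(lia) : d < len n + d.+1) hm1.
have rx1 := last_opener_block d_gt0 hm1 ox xmax.
have rx2 : r2 x (x + d).
  by apply: last_opener_block d_gt0 hm2 _ _ => [|a]; rewrite -eo //; apply: xmax.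
have [xL hm1' ew1] := max_brauer_peel d_gt0 hm1 rx1.
have [_ hm2' ew2] := max_brauer_peel d_gt0 hm2 rx2.
have e' : contract_block d x r1 =2 contract_block d x r2.
  apply: IH => //; apply: (@insert_word_inj d x); rewrite ?size_mkseq //.
  by rewrite -ew1 -ew2.
move=> a b; rewrite (insert_contract_block hm1.1 rx1) (insert_contract_block hm2.1 rx2).
by rewrite /insert_block e'.
Qed.

Lemma max_brauer_of_walk n w : size w = len n -> walk d (d - 1) w = Some 0 ->
  exists2 r, max_brauer d (len n) r & word (len n) r = w.
Proof.
elim: n w => [|n IH] w sw hw.
  have ew : w = nseq (size w) false.
    by apply: count_true0; have := walk_count hw; rewrite sw len0; lia.
  have L0 : len 0 <= d by rewrite len0; lia.
  have hr : brauer d (len 0) (fun _ _ => false) by [].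
  exists (fun _ _ => false); last by rewrite (word_short L0 hr) -sw -ew.
  by split=> // u v uv; have := chord_ge uv; have := chord_lt uv; lia.
have /(walk_last_block hw)[x [w' [xw' ew hw']]] : true \in w.
  by rewrite -has_pred1 has_count; have := walk_count hw; rewrite sw lenS; lia.
have sw' : size w' = len n by move: sw; rewrite ew size_insert_word // lenS; lia.
have [r' hm' ew'] := IH _ sw' hw'.
have xn : x <= len n by rewrite -sw'.
exists (insert_block d x r'); rewrite lenS; first exact: max_brauer_insert.
by rewrite word_insert_block // ?ew' -?ew //; case: hm'.
Qed.

End Bijection.

(** * Counting walks *)

Fixpoint bool_seqs n : seq (seq bool) :=
  if n is n'.+1 then [seq false :: w | w <- bool_seqs n'] ++ [seq true :: w | w <- bool_seqs n']
  else [:: [::]].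

Lemma mem_cons_map (T : eqType) (b c : T) w s :
  (b :: w \in [seq c :: u | u <- s]) = (b == c) && (w \in s).
Proof. by apply/mapP/andP => [[u us [-> ->]]|[/eqP-> ws]]; [split | exists w]. Qed.

Lemma mem_bool_seqs n w : (w \in bool_seqs n) = (size w == n).
Proof.
elim: n w => [|n IH] [|b w] //=; rewrite mem_cat.
  by apply/norP; split; apply/mapP => -[].
by rewrite !mem_cons_map IH eqSS; case: b; rewrite /= ?orbF.
Qed.

Lemma uniq_bool_seqs n : uniq (bool_seqs n).
Proof.
elim: n => [//|n IH] /=; rewrite cat_uniq !map_inj_uniq // ?IH /=; try by move=> ? ? [].
by rewrite andbT; apply/hasP => -[_ /mapP[? _ ->]]; rewrite mem_cons_map.
Qed.

Definition nwalks d k L := count (fun w => walk d k w == Some 0) (bool_seqs L).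

Lemma nwalksS d k L :
  nwalks d k L.+1 = (if k is k'.+1 then nwalks d k' L else 0) + nwalks d (k + d) L.
Proof.
rewrite /nwalks /= count_cat !count_map; congr (_ + _).
by case: k => [|k] //; rewrite (eq_count (a2 := pred0)) ?count_pred0.
Qed.

Lemma nwalks_diag d k : nwalks d k k = 1.
Proof.
rewrite /nwalks -size_filter (@perm_size _ _ [:: nseq k false]) //.
apply: uniq_perm => [||w]; [exact: filter_uniq (uniq_bool_seqs k) | by [] |].
rewrite mem_filter mem_bool_seqs inE; apply/andP/eqP => [[/eqP hw /eqP sw]|->].
  have c0 : count_mem true w = 0 by have := walk_count hw; rewrite sw; nia.
  by rewrite (count_true0 c0) sw.
by rewrite walk_nseq_false leqnn subnn size_nseq.
Qed.

Lemma bin_succ_ratio d m K : K = d.+1 * m.+1 + d -> 'C(K, m.+2) = d * 'C(K, m.+1).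
Proof.
move=> eK; apply/eqP; rewrite -(eqn_pmul2l (ltn0Sn m.+1)) mul_bin_left mulnCA.
by rewrite (_ : K - m.+1 = d * m.+2) 1?mulnC // eK; nia.
Qed.

Lemma nwalks_closed d m k :
  nwalks d k (d.+1 * m.+1 + k) + d * 'C(d.+1 * m.+1 + k, m) = 'C(d.+1 * m.+1 + k, m.+1).
Proof.
elim: m k => [|m IHm] k.
  rewrite muln1 bin0 bin1 muln1; elim: k => [|k IHk].
    by rewrite addn0 nwalksS add0n nwalks_diag; lia.
  have e : d.+1 + k = k.+1 + d by lia.
  by rewrite addnS nwalksS {2}e nwalks_diag; lia.
elim: k => [|k IHk].
  rewrite (_ : d.+1 * m.+2 + 0 = (d.+1 * m.+1 + d).+1); last by lia.
  move: (IHm d) (@bin_succ_ratio d m _ erefl); move: (d.+1 * m.+1 + d) => K IH ratio.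
  by rewrite nwalksS !add0n !binS; nia.
rewrite (_ : d.+1 * m.+2 + k.+1 = (d.+1 * m.+2 + k).+1); last by lia.
have IH := IHm (k.+1 + d).
rewrite (_ : d.+1 * m.+1 + (k.+1 + d) = d.+1 * m.+2 + k) in IH; last by lia.
move: IHk IH; move: (d.+1 * m.+2 + k) => K IHk IH.
by rewrite nwalksS !binS; nia.
Qed.

Lemma nwalks_ballot d n : 0 < d -> 0 < n ->
  (n + 1) * nwalks d (d - 1) (d.+1 * n + (d - 1)) = 'C(d.+1 * n + (d - 1), n).
Proof.
move=> d0; case: n => [//|n] _.
have := nwalks_closed d n (d - 1); set N := d.+1 * n.+1 + (d - 1) => closed.
have := mul_bin_left N n; rewrite (_ : N - n = d * n.+2); last by rewrite /N; nia.
by move: closed; nia.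
Qed.

(** * Back to the polygon *)

Lemma set2_ltn_inj m (i j k l : 'I_m) :
  i < j -> k < l -> [set i; j] = [set k; l] -> i = k /\ j = l.
Proof.
move=> ij kl e.
have : i \in [set k; l] by rewrite -e set21.
have : j \in [set k; l] by rewrite -e set22.
rewrite !inE => /orP[]/eqP ej /orP[]/eqP ei //; exfalso; move: ij kl; rewrite ej ei; lia.
Qed.

Section Polygon.

Variables d n : nat.
Hypothesis d_gt0 : 0 < d.

Local Notation N := (Nsz d n).

Implicit Types (R : {set {set vert d n}}) (D : {set vert d n}) (r : rel nat).

Lemma ddiagP D :
  is_ddiag D <-> exists i j : vert d n, [/\ i < j, D = [set i; j] & chord d N i j].
Proof.
have hN : N = d.+1 * n + (d - 1) by rewrite /Nsz; lia.
split.
  case/existsP=> x /existsP[y /and3P[/eqP-> xy /existsP[j /eqP ey]]].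
  have {}ey : (y : nat) = (x + d + j * (d + 1)) %% N := ey.
  have xN := ltn_ord x; have yN := ltn_ord y.
  have jn : j.+1 * (d + 1) <= n * (d + 1) by rewrite leq_mul2r ltn_ord orbT.
  have [xjN|Nxj] := ltnP (x + d + j * (d + 1)) N.
    move: ey; rewrite modn_small // => ey.
    exists x, y; split=> //; first lia.
    by apply/chordP; split; [lia | | exists j]; lia.
  move: ey; rewrite -(subnK Nxj) modnDr modn_small; last by lia.
  move=> ey; exists y, x; split; [lia | by rewrite setUC |].
  by apply/chordP; split; [lia | | exists (n - j - 1)]; nia.
case=> i [j [ij -> /chordP[_ jN [q jiq]]]].
have qn : q < n by nia.
apply/existsP; exists i; apply/existsP; exists j.
rewrite eqxx neq_ltn ij /=; apply/existsP; exists (Ordinal qn) => /=.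
by rewrite modn_small; lia.
Qed.

Lemma chords_disjoint_set2 (i j k l : vert d n) : i < j -> k < l ->
  chords_disjoint [set i; j] [set k; l] = apart i j k l.
Proof.
move=> ij kl.
have crossE (a b c e : vert d n) : a < b -> c < e ->
    chords_cross [set a; b] [set c; e] = [&& a < c, c < b & b < e].
  move=> ab ce; apply/existsP/and3P => [[a' /existsP[b' /existsP[c' /existsP[e']]]]|[ac cb be]].
    case/and3P=> /eqP e1 /eqP e2 /andP[/andP[h1 h2] h3].
    have [-> ->] := set2_ltn_inj ab (ltn_trans h1 h2) e1.
    by have [-> ->] := set2_ltn_inj ce (ltn_trans h2 h3) e2; rewrite h1 h2 h3.
  exists a; apply/existsP; exists b; apply/existsP; exists c; apply/existsP; exists e.
  by rewrite !eqxx ac cb be.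
rewrite /chords_disjoint !crossE // disjoints_subset subUset !sub1set !inE !negb_or.
by rewrite /apart -!andbA.
Qed.

Definition chord_rel R : rel nat := fun a b =>
  [exists i : vert d n, exists j : vert d n,
     [&& val i == a, val j == b, i < j & [set i; j] \in R]].

Definition chord_set r : {set {set vert d n}} :=
  [set D | [exists i : vert d n, exists j : vert d n, [&& i < j, r i j & D == [set i; j]]]].

Lemma chord_relP R a b :
  reflect (exists i j : vert d n, [/\ val i = a, val j = b, i < j & [set i; j] \in R])
          (chord_rel R a b).
Proof.
apply: (iffP existsP) => [[i /existsP[j /and4P[/eqP ia /eqP jb ij ijR]]]|[i [j [<- <- ij ijR]]]].
  by exists i, j.
by exists i; apply/existsP; exists j; rewrite !eqxx ij ijR.
Qed.

Lemma chord_rel_set2 R (i j : vert d n) : i < j ->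
  chord_rel R i j = ([set i; j] \in R).
Proof.
move=> ij; apply/chord_relP/idP => [[i' [j' [/val_inj-> /val_inj-> _ //]]]|ijR].
by exists i, j.
Qed.

Lemma mem_chord_set r D :
  reflect (exists i j : vert d n, [/\ i < j, r i j & D = [set i; j]]) (D \in chord_set r).
Proof.
rewrite inE; apply: (iffP existsP) => [[i /existsP[j /and3P[ij rij /eqP->]]]|[i [j [ij rij ->]]]].
  by exists i, j.
by exists i; apply/existsP; exists j; rewrite ij rij eqxx.
Qed.

Lemma brauer_rel_chord R : brauer_rel R -> forall D, D \in R ->
  exists i j : vert d n, [/\ i < j, D = [set i; j] & chord d N i j].
Proof. by move=> hR D /hR.1/ddiagP. Qed.

Lemma brauer_chord_rel R : brauer_rel R -> brauer d N (chord_rel R).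
Proof.
move=> hR; split.
  move=> a b /chord_relP[i [j [<- <- ij /(brauer_rel_chord hR)[i' [j' [ij' e hc]]]]]].
  by have [-> ->] := set2_ltn_inj ij ij' e.
move=> a b u v /chord_relP[i [j [<- <- ij ijR]]] /chord_relP[k [l [<- <- kl klR]]] ne.
rewrite -chords_disjoint_set2 //; apply: hR.2 => //; apply: contraTneq ne => e.
by have [-> ->] := set2_ltn_inj ij kl e; rewrite !eqxx.
Qed.

Lemma chord_rel_subset R1 R2 : brauer_rel R1 ->
  (forall a b, chord_rel R1 a b -> chord_rel R2 a b) -> R1 \subset R2.
Proof.
move=> hR sub; apply/subsetP => D /[dup] DR /(brauer_rel_chord hR)[i [j [ij eD _]]].
by rewrite eD -chord_rel_set2 // sub // chord_rel_set2 // -eD.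
Qed.

Lemma brauer_rel_setU1 R (i j : vert d n) : brauer_rel R -> i < j -> chord d N i j ->
  (forall a b, chord_rel R a b -> apart a b i j) -> brauer_rel ([set i; j] |: R).
Proof.
move=> hR ij hc hall.
have disj D : D \in R -> chords_disjoint D [set i; j] && chords_disjoint [set i; j] D.
  move=> /[dup] DR /(brauer_rel_chord hR)[k [l [kl eD _]]]; rewrite eD !chords_disjoint_set2 //.
  by rewrite apart_sym andbb apart_sym; apply: hall; rewrite chord_rel_set2 // -eD.
split=> [D|D1 D2]; rewrite !inE.
  by case/orP=> [/eqP->|/hR.1 //]; apply/ddiagP; exists i, j.
case/orP=> [/eqP->|D1R] /orP[/eqP->|D2R] ne; first by rewrite eqxx in ne.
- by case/andP: (disj _ D2R).
- by case/andP: (disj _ D1R).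
- exact: hR.2.
Qed.

Lemma max_brauer_relE R : brauer_rel R ->
  max_brauer_rel R <-> saturated d N (chord_rel R).
Proof.
move=> hR; split => [[_ hmax] u v uv|hs]; last first.
  split=> // S hS /[dup] RS /subsetP RS'; apply/eqP; rewrite eqEsubset RS andbT.
  apply/subsetP => D DS; have [i [j [ij eD hc]]] := brauer_rel_chord hS DS.
  have [x [y [/chord_relP[k [l [<- <- kl klR]]] nap]]] := hs _ _ hc.
  have [e|ne] := eqVneq [set k; l] D; first by rewrite -e.
  by move: (hS.2 _ _ (RS' _ klR) DS ne); rewrite eD chords_disjoint_set2 // (negbTE nap).
apply: contrapT => unblocked.
have hall x y : chord_rel R x y -> apart x y u v.
  by move=> rxy; apply: contrapT => /negP nap; apply: unblocked; exists x, y.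
have [uv' vN _] := chordP _ _ _ _ uv.
pose iu : vert d n := Ordinal (ltn_trans uv' vN); pose iv : vert d n := Ordinal vN.
have : [set iu; iv] \in R.
  have hS := @brauer_rel_setU1 R iu iv hR uv' uv hall.
  by rewrite -(hmax _ hS (subsetUr _ _)) setU11.
by rewrite -chord_rel_set2 // => /hall; rewrite /apart eqxx.
Qed.

Lemma chord_setK r : brauer d N r ->
  brauer_rel (chord_set r) /\ chord_rel (chord_set r) =2 r.
Proof.
move=> [hc hv]; split; first split.
- by move=> D /mem_chord_set[i [j [ij rij ->]]]; apply/ddiagP; exists i, j; rewrite hc.
- move=> D1 D2 /mem_chord_set[i [j [ij rij ->]]] /mem_chord_set[k [l [kl rkl ->]]] ne.
  rewrite chords_disjoint_set2 //; apply: hv => //.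
  by apply: contraNT ne; rewrite negb_or !negbK => /andP[/eqP/val_inj-> /eqP/val_inj->].
move=> a b; apply/chord_relP/idP => [[i [j [<- <- ij /mem_chord_set]]]|rab].
  by case=> i' [j' [ij' rij' e]]; have [-> ->] := set2_ltn_inj ij ij' e.
have [ab bN _] := chordP _ _ _ _ (hc _ _ rab).
exists (Ordinal (ltn_trans ab bN)), (Ordinal bN); split=> //.
by apply/mem_chord_set; exists (Ordinal (ltn_trans ab bN)), (Ordinal bN).
Qed.

Definition max_brauer_rels : seq {set {set vert d n}} :=
  enum [pred R | `[< max_brauer_rel R >]].

Lemma mem_max_brauer_rels R : R \in max_brauer_rels <-> max_brauer_rel R.
Proof. by rewrite mem_enum inE; split => /asboolP. Qed.

Lemma max_brauer_chord_rel R : max_brauer_rel R -> max_brauer d N (chord_rel R).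
Proof.
by move=> hR; split; [exact: brauer_chord_rel hR.1 | apply/max_brauer_relE; case: hR].
Qed.

Lemma perm_max_brauer_rels_walks :
  perm_eq [seq word N (chord_rel R) | R <- max_brauer_rels]
          [seq w <- bool_seqs N | walk d (d - 1) w == Some 0].
Proof.
have eN : N = d.+1 * n + (d - 1) by rewrite /Nsz; lia.
apply: uniq_perm; last move=> w.
- rewrite map_inj_in_uniq ?enum_uniq // => R1 R2 /mem_max_brauer_rels h1 /mem_max_brauer_rels h2.
  have m1 := max_brauer_chord_rel h1; have m2 := max_brauer_chord_rel h2.
  have := @max_brauer_word_inj d d_gt0 n (chord_rel R1) (chord_rel R2).
  rewrite -eN => /(_ m1 m2) inj /inj e.
  apply/eqP; rewrite eqEsubset (chord_rel_subset h1.1) ?(chord_rel_subset h2.1) // => a b;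
  by rewrite e.
- exact: filter_uniq (uniq_bool_seqs N).
rewrite mem_filter mem_bool_seqs; apply/mapP/andP => [[R /mem_max_brauer_rels hR ->]|].
  have := @walk_word_max_brauer d d_gt0 n (chord_rel R).
  by rewrite -eN size_mkseq eqxx => ->; last exact: max_brauer_chord_rel.
case=> /eqP walk_w /eqP size_w.
have := @max_brauer_of_walk d d_gt0 n w; rewrite -eN => /(_ size_w walk_w)[r [hr hs] <-].
have [hR e] := chord_setK hr.
exists (chord_set r); last exact: eq_word.
apply/mem_max_brauer_rels/max_brauer_relE => // u v /hs[x [y [rxy nap]]].
by exists x, y; rewrite e.
Qed.

End Polygon.

Theorem theorem8p19 (d n : nat) (hd : 1 <= d) (hn : 0 < n) :
  exists L : seq {set {set vert d n}},
    uniq L /\ (forall R, R \in L <-> max_brauer_rel R) /\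
    (n + 1) * size L = 'C((d + 1) * n + d - 1, n).
Proof.
exists (max_brauer_rels d n); split; first exact: enum_uniq.
split; first exact: mem_max_brauer_rels.
rewrite -(size_map (fun R => word (Nsz d n) (chord_rel R))).
rewrite (perm_size (@perm_max_brauer_rels_walks d n hd)) size_filter.
have -> : Nsz d n = d.+1 * n + (d - 1) by rewrite /Nsz; lia.
have -> : (d + 1) * n + d - 1 = d.+1 * n + (d - 1) by lia.
exact: nwalks_ballot.
Qed.
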